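(* Let $V$ be a finite set and let $A$ be a real symmetric matrix indexed by $V$. If $A$ does not contain any self-contained family of weighted chordless walks, then $A$ has a simplicial vertex.
   Context: An element $v\in V$ is simplicial in $A$ if $A_{yz}\ge\min\{A_{vy},A_{vz}\}$ for all distinct $y,z\in V\setminus\{v\}$. A walk is an ordered sequence $W=(v_0,\dots,v_p)$ ($p\ge1$) of elements of $V$; $V(W)=\{v_0,\dots,v_p\}$, $I(W)=\{v_1,\dots,v_{p-1}\}$. $W$ is weighted chordless in $A$ if $A_{v_{i-1}v_{i+1}}<\min\{A_{v_{i-1}v_i},A_{v_{i+1}v_i}\}$ for $1\le i\le p-1$. A finite family $\{W_1,\dots,W_k\}$ of walks is self-contained if $\bigcup_h V(W_h)=\bigcup_h I(W_h)$. *)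

From HB Require Import structures.
From mathcomp Require Import all_boot all_order all_algebra.
From mathcomp Require Import reals.
Set Implicit Arguments. Unset Strict Implicit. Unset Printing Implicit Defensive.
Import Order.TTheory GRing.Theory Num.Theory.
Local Open Scope ring_scope.

Section Defs.
Variables (R : realType) (V : finType) (A : V -> V -> R).

Definition simplicial (v : V) : Prop :=
  forall y z : V, y != v -> z != v -> y != z ->
    Num.min (A v y) (A v z) <= A y z.

(* A walk (v_0,...,v_p), p >= 1, is a sequence of length >= 2. *)
Definition is_walk (W : seq V) : bool := (2 <= size W)%N.

Definition walk_vertices (W : seq V) : {set V} := [set x in W].

(* I(W) = {v_1, ..., v_{p-1}} *)
Definition walk_interior (W : seq V) : {set V} :=
  [set x in take (size W - 2) (behead W)].

Fixpoint weighted_chordless (W : seq V) : bool :=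
  match W with
  | a :: ((b :: c :: _) as t) =>
      (A a c < Num.min (A a b) (A c b)) && weighted_chordless t
  | _ => true
  end.

Definition self_contained (F : seq (seq V)) : Prop :=
  \bigcup_(W <- F) walk_vertices W = \bigcup_(W <- F) walk_interior W.

Definition contains_sc_chordless_family : Prop :=
  exists F : seq (seq V),
    [/\ F != [::], all (fun W => is_walk W && weighted_chordless W) F
      & self_contained F].

End Defs.

(* A vertex v that is not simplicial witnesses y, z with A_yz < min (A_vy, A_vz),
   i.e. a weighted chordless walk (y, v, z) with v in its interior.  If no vertex
   is simplicial, the family of all weighted chordless walks of length two thus
   has every vertex in its interior, so it is self-contained. *)
From HB Require Import structures.
From mathcomp Require Import all_boot all_order all_algebra.
From mathcomp Require Import reals.
From Stdlib Require Import Classical.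
Set Implicit Arguments. Unset Strict Implicit. Unset Printing Implicit Defensive.
Import Order.TTheory GRing.Theory Num.Theory.
Local Open Scope ring_scope.

Lemma mem_bigcup_seq (T : finType) (I : eqType) (r : seq I) (F : I -> {set T}) i x :
  i \in r -> x \in F i -> x \in \bigcup_(j <- r) F j.
Proof. by move=> ri xF; rewrite (big_rem i) //= inE xF. Qed.

Lemma walk_interior_sub (V : finType) (W : seq V) :
  walk_interior W \subset walk_vertices W.
Proof.
apply/subsetP => x; rewrite !inE => /mem_take.
by case: W => //= a W xW; rewrite inE xW orbT.
Qed.

Lemma self_contained_of_cover (V : finType) (F : seq (seq V)) :
  \bigcup_(W <- F) walk_interior W = [set: V] -> self_contained F.
Proof.
move=> coverF; apply/eqP; rewrite /self_contained coverF eqEsubset subsetT /= -{1}coverF.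
elim/big_rec2: _ => [|W X Y _ sYX]; first exact: sub0set.
exact: setUSS (walk_interior_sub W) sYX.
Qed.

Section ChordlessTriples.
Variables (R : realType) (V : finType) (A : V -> V -> R).

Definition chordless_triples : seq (seq V) :=
  [seq [:: t.1.1; t.1.2; t.2] |
     t <- enum [pred t : V * V * V | weighted_chordless A [:: t.1.1; t.1.2; t.2]]].

Lemma mem_chordless_triples y v z :
  weighted_chordless A [:: y; v; z] -> [:: y; v; z] \in chordless_triples.
Proof. by move=> yvz; apply/mapP; exists (y, v, z); rewrite ?mem_enum. Qed.

Lemma chordless_triples_chordless_walks :
  all (fun W => is_walk W && weighted_chordless A W) chordless_triples.
Proof. by apply/allP => W /mapP[t]; rewrite mem_enum => yvz ->. Qed.

Lemma chordless_triples_cover :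
  (forall v, exists y z, weighted_chordless A [:: y; v; z]) ->
  \bigcup_(W <- chordless_triples) walk_interior W = [set: V].
Proof.
move=> chordless_at; apply/setP => v; rewrite inE.
have [y [z /mem_chordless_triples yvz]] := chordless_at v.
by apply: mem_bigcup_seq yvz _; rewrite !inE.
Qed.

Hypothesis A_sym : forall x y, A x y = A y x.

Lemma not_simplicial_chordless v :
  ~ simplicial A v -> exists y z, weighted_chordless A [:: y; v; z].
Proof.
move=> not_simp; apply: NNPP => no_walk; apply: not_simp => y z _ _ _.
rewrite leNgt; apply/negP => yvz; apply: no_walk; exists y, z.
by rewrite /= andbT (A_sym y v) (A_sym z v).
Qed.

End ChordlessTriples.

Theorem lemma6 (R : realType) (V : finType) (A : V -> V -> R) :
  (0 < #|V|)%N ->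
  (forall x y : V, A x y = A y x) ->
  ~ contains_sc_chordless_family A ->
  exists v : V, simplicial A v.
Proof.
move=> V_gt0 A_sym no_family; apply: NNPP => no_simplicial; apply: no_family.
have chordless_at v : exists y z, weighted_chordless A [:: y; v; z].
  by apply: not_simplicial_chordless => // simp_v; apply: no_simplicial; exists v.
exists (chordless_triples A); split.
- case/card_gt0P: V_gt0 => v _; have [y [z /mem_chordless_triples]] := chordless_at v.
  by case: chordless_triples.
- exact: chordless_triples_chordless_walks.
- exact/self_contained_of_cover/chordless_triples_cover.
Qed.
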